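(* Let $\mathcal{R}$ be a ring and let $(\mathcal{C}^{\bullet},\partial)$ be a bigraded cochain complex of $\mathcal{R}$-modules as described in the context. Then there is a commutative diagram with exact rows and exact columns whose rows are \[ 0\to B^{1}(\mathcal{N}_{0},\overline{\partial})\hookrightarrow B^{1}(\mathcal{C},\partial)\xrightarrow{\pi_{1}} B^{1}(\mathcal{C}^{0,\bullet},\partial_{0,1})\to 0, \] \[ 0\to Z^{1}(\mathcal{N}_{0},\overline{\partial})\hookrightarrow Z^{1}(\mathcal{C},\partial)\xrightarrow{\pi_{1}} \ker(\rho_{1})\to 0, \] \[ 0\to H^{1}(\mathcal{N}_{0},\overline{\partial})\to H^{1}(\mathcal{C},\partial)\to \frac{\ker(\rho_{1})}{B^{1}(\mathcal{C}^{0,\bullet},\partial_{0,1})}\to 0, \] where the vertical maps from the first to the second row are inclusions, the vertical maps from the second to the third row are the canonical quotient projections, and the maps of the third row are the ones induced by those of the second row. In particular, $B^{1}(\mathcal{C}^{0,\bullet},\partial_{0,1})\subseteq\ker(\rho_{1})$ and the last row is a short exact sequence.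
   Context: Setting: $\mathcal{C}^{\bullet}=\bigoplus_{k\in\mathbb{Z}}\mathcal{C}^{k}$ is a graded $\mathcal{R}$-module with a compatible bigrading $\mathcal{C}^{k}=\bigoplus_{p+q=k}\mathcal{C}^{p,q}$, where $\mathcal{C}^{p,q}=\{0\}$ whenever $p<0$ or $q<0$; $\partial$ is an $\mathcal{R}$-linear map of degree $1$ with $\partial^{2}=0$, and $\partial=\partial_{2,-1}+\partial_{1,0}+\partial_{0,1}$ with $\partial_{i,j}(\mathcal{C}^{p,q})\subseteq\mathcal{C}^{p+i,q+j}$. For $\eta\in\mathcal{C}^{k}$, $\eta_{p,q}$ denotes its component in $\mathcal{C}^{p,q}$. For $q\in\mathbb{Z}$, $G^{q}\mathcal{C}:=\bigoplus_{j\geq q}\mathcal{C}^{i,j}$ and $\pi_{q}:\mathcal{C}\to G^{q}\mathcal{C}$ is the projection along the bigrading. $Z,B,H$ denote cocycles, coboundaries, cohomology; since $\partial_{0,1}^{2}=0$, $(\mathcal{C}^{0,\bullet},\partial_{0,1})$ is a cochain complex. Let $\mathcal{N}^{p,q}:=\ker(\partial_{0,1}|_{\mathcal{C}^{p,q}})\cap\ker(\partial_{2,-1}|_{\mathcal{C}^{p,q}})$ and $\mathcal{N}_{0}:=\bigoplus_{p}\mathcal{N}^{p,0}$ (so $\mathcal{N}^{p,0}=\ker(\partial_{0,1}:\mathcal{C}^{p,0}\to\mathcal{C}^{p,1})$, in degree $p$); this is a subcomplex of $(\mathcal{C},\partial)$ and $\overline{\partial}$ denotes the restriction of $\partial$ to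 it (which equals $\partial_{1,0}$ there). Let $\mathcal{A}^{k}:=\{\pi_{1}(\eta)\mid\eta\in\mathcal{C}^{k},\ \pi_{1}(\partial\eta)=0\}$. For $\xi\in\mathcal{A}^{k}$ and any $\eta\in\mathcal{C}^{k}$ with $\pi_{1}\eta=\xi$, $\pi_{1}(\partial\eta)=0$, the element $\partial_{2,-1}\xi_{k-1,1}+\partial_{1,0}\eta_{k,0}$ is a $(k+1)$-cocycle of $(\mathcal{N}_{0},\overline{\partial})$ whose cohomology class depends only on $\xi$; this defines the linear map $\rho_{k}:\mathcal{A}^{k}\to H^{k+1}(\mathcal{N}_{0},\overline{\partial})$, $\rho_{k}(\xi):=[\partial_{2,-1}\xi_{k-1,1}+\partial_{1,0}\eta_{k,0}]$. *)

From HB Require Import structures.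
From mathcomp Require Import all_boot all_order all_algebra.
Set Implicit Arguments. Unset Strict Implicit. Unset Printing Implicit Defensive.
Import GRing.Theory.
Local Open Scope ring_scope.

(* A bigraded cochain complex of R-modules C^{p,q} (p,q >= 0; components with
   a negative index are zero and hence omitted), with total differential
   d = d21 + d10 + d01, where
     d10 p q : C^{p,q}   -> C^{p+1,q}
     d01 p q : C^{p,q}   -> C^{p,q+1}
     d21 p q : C^{p,q+1} -> C^{p+2,q}   (d_{2,-1}; it vanishes on C^{p,0}).
   The condition d^2 = 0 on the total complex C^k = (+)_{p+q=k} C^{p,q} is
   written out bidegree by bidegree. *)
Record bicomplex (R : nzRingType) := Bicomplex {
  Cpq : nat -> nat -> lmodType R;
  d10 : forall p q, {linear Cpq p q -> Cpq p.+1 q};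
  d01 : forall p q, {linear Cpq p q -> Cpq p q.+1};
  d21 : forall p q, {linear Cpq p q.+1 -> Cpq p.+2 q};
  dd_02 : forall p q (x : Cpq p q), d01 _ _ (d01 _ _ x) = 0;
  dd_11 : forall p q (x : Cpq p q), d10 _ _ (d01 _ _ x) + d01 _ _ (d10 _ _ x) = 0;
  (* bidegree (2,0), on C^{p,0} (no d21 on C^{p,0}) *)
  dd_20_0 : forall p (x : Cpq p 0), d10 _ _ (d10 _ _ x) + d21 _ _ (d01 _ _ x) = 0;
  dd_20_S : forall p q (x : Cpq p q.+1),
      d10 _ _ (d10 _ _ x) + d01 _ _ (d21 _ _ x) + d21 _ _ (d01 _ _ x) = 0;
  dd_3m1 : forall p q (x : Cpq p q.+1), d10 _ _ (d21 _ _ x) + d21 _ _ (d10 _ _ x) = 0;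
  dd_4m2 : forall p q (x : Cpq p q.+2), d21 _ _ (d21 _ _ x) = 0
}.
Arguments d10 {R} b {p q}.
Arguments d01 {R} b {p q}.
Arguments d21 {R} b {p q}.

Section Low.
Variables (R : nzRingType) (K : bicomplex R).
Local Notation C := (Cpq K).
Local Notation d10 := (d10 K).
Local Notation d01 := (d01 K).
Local Notation d21 := (d21 K).

Definition C0 := C 0 0.
Definition C1 := (C 1 0 * C 0 1)%type.
Definition C2 := (C 2 0 * (C 1 1 * C 0 2))%type.

Definition dtot0 (y : C 0 0) : C1 := (d10 y, d01 y).
Definition dtot1 (x : C1) : C2 :=
  (d10 x.1 + d21 x.2, (d01 x.1 + d10 x.2, d01 x.2)).

(* pi_1 : projection onto G^1 C (components with q >= 1) *)
Definition pi1_1 (x : C1) : C 0 1 := x.2.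
Definition pi1_2 (z : C2) : (C 1 1 * C 0 2)%type := z.2.

Definition incl1 (a : C 1 0) : C1 := (a, 0).

(* (N_0, dbar): N^{p,0} = ker(d01 : C^{p,0} -> C^{p,1}), dbar = d10 *)
Definition N0 p (x : C p 0) : Prop := d01 x = 0.
Definition B1N0 (x : C 1 0) : Prop := exists y : C 0 0, N0 y /\ d10 y = x.
Definition Z1N0 (x : C 1 0) : Prop := N0 x /\ d10 x = 0.
Definition B2N0 (x : C 2 0) : Prop := exists a : C 1 0, N0 a /\ d10 a = x.
Definition Z2N0 (x : C 2 0) : Prop := N0 x /\ d10 x = 0.

Definition B1C (x : C1) : Prop := exists y : C0, dtot0 y = x.
Definition Z1C (x : C1) : Prop := dtot1 x = 0.

Definition B1C0 (b : C 0 1) : Prop := exists y : C 0 0, d01 y = b.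

Definition A1 (xi : C 0 1) : Prop :=
  exists eta : C1, pi1_1 eta = xi /\ pi1_2 (dtot1 eta) = 0.

(* c is a representative of the class rho_1(xi) in H^2(N_0, dbar):
   c = d21 xi_{0,1} + d10 eta_{1,0} for some eta with pi_1 eta = xi and
   pi_1 (d eta) = 0. *)
Definition rho1_rep (xi : C 0 1) (c : C 2 0) : Prop :=
  exists eta : C1, [/\ pi1_1 eta = xi, pi1_2 (dtot1 eta) = 0 &
                       c = d21 (pi1_1 eta) + d10 eta.1].

Definition ker_rho1 (xi : C 0 1) : Prop :=
  A1 xi /\ exists c, rho1_rep xi c /\ B2N0 c.

End Low.

Arguments N0 {R} K {p} x.
Arguments dtot0 {R} K y.
Arguments dtot1 {R} K x.
Arguments pi1_1 {R} K x.
Arguments pi1_2 {R} K z.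
Arguments incl1 {R} K a.
Arguments B1N0 {R} K x.
Arguments Z1N0 {R} K x.
Arguments B2N0 {R} K x.
Arguments Z2N0 {R} K x.
Arguments B1C {R} K x.
Arguments Z1C {R} K x.
Arguments B1C0 {R} K b.
Arguments A1 {R} K xi.
Arguments rho1_rep {R} K xi c.
Arguments ker_rho1 {R} K xi.

Definition submod (R : nzRingType) (M : lmodType R) (P : M -> Prop) : Prop :=
  [/\ P 0, (forall x y, P x -> P y -> P (x + y)) &
      (forall (r : R) x, P x -> P (r *: x))].

(* (Z, B) describes the subquotient Z/B of M: submodules B <= Z <= M *)
Definition subquot (R : nzRingType) (M : lmodType R) (Z B : M -> Prop) : Prop :=
  [/\ submod Z, submod B & forall x, B x -> Z x].

Definition zeroP (R : nzRingType) (M : lmodType R) (x : M) : Prop := x = 0.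

(* ses Z1 B1 Z2 B2 Z3 B3 f g : the linear maps f : M1 -> M2, g : M2 -> M3
   induce maps  Z1/B1 -> Z2/B2 -> Z3/B3  (well defined), and
   0 -> Z1/B1 -> Z2/B2 -> Z3/B3 -> 0 is exact.  Everything is unfolded to
   elements of the ambient modules (quotient modules are not available). *)
Definition ses (R : nzRingType) (M1 M2 M3 : lmodType R)
    (Z1 B1 : M1 -> Prop) (Z2 B2 : M2 -> Prop) (Z3 B3 : M3 -> Prop)
    (f : M1 -> M2) (g : M2 -> M3) : Prop :=
  [/\ subquot Z1 B1 /\ subquot Z2 B2 /\ subquot Z3 B3,
      (forall (r : R) x y, f (r *: x + y) = r *: f x + f y) /\
      (forall (r : R) x y, g (r *: x + y) = r *: g x + g y),
      [/\ forall x, Z1 x -> Z2 (f x), forall x, B1 x -> B2 (f x),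
          forall y, Z2 y -> Z3 (g y) & forall y, B2 y -> B3 (g y)],
      (* exactness at Z1/B1: induced f injective *)
      (forall x, Z1 x -> B2 (f x) -> B1 x) &
      [/\ (* exactness at Z2/B2: im fbar <= ker gbar and ker gbar <= im fbar *)
          (forall x, Z1 x -> B3 (g (f x))),
          (forall y, Z2 y -> B3 (g y) -> exists2 x, Z1 x & B2 (y - f x)) &
          (* exactness at Z3/B3: induced g surjective *)
          (forall z, Z3 z -> exists2 y, Z2 y & B3 (z - g y))]].

From HB Require Import structures.
From mathcomp Require Import all_boot all_order all_algebra.
Set Implicit Arguments.
Unset Strict Implicit.
Unset Printing Implicit Defensive.
Import GRing.Theory.
Local Open Scope ring_scope.

(* The (0,1)-component xi of a 1-cocycle y lies in ker(rho_1), because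
   d21 xi + d10 y_{1,0} is then already 0. Conversely, if xi is in ker(rho_1),
   pick eta with pi_1 eta = xi and pi_1 (d eta) = 0 and write
   d21 xi + d10 eta_{1,0} = d10 a with a in N^{1,0}; then (eta_{1,0} - a, xi)
   is a 1-cocycle lifting xi. A 1-cocycle with vanishing (0,1)-component is a
   1-cocycle of N_0. This gives the exact rows of coboundaries and cocycles;
   since their columns 0 -> B -> Z -> Z/B -> 0 are exact, the row of
   cohomologies is exact by the 3x3 lemma. *)

Section Subquotients.
Variable R : nzRingType.

Lemma submod0 (M : lmodType R) : submod (@zeroP R M).
Proof.
by split=> [|x y -> ->|r x ->]; rewrite /zeroP ?addr0 ?scaler0.
Qed.

Lemma subquot0 (M : lmodType R) (Z : M -> Prop) : submod Z -> subquot Z (@zeroP R M).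
Proof. by move=> sZ; split=> // [|x ->]; [exact: submod0 | case: sZ]. Qed.

Lemma submod_ext (M : lmodType R) (P Q : M -> Prop) :
  (forall x, P x <-> Q x) -> submod P -> submod Q.
Proof.
move=> PQ [P0 PD PZ]; split=> [|x y /PQ Px /PQ Py|r x /PQ Px]; apply/PQ => //.
  exact: PD.
exact: PZ.
Qed.

Lemma submodB (M : lmodType R) (P : M -> Prop) x y :
  submod P -> P x -> P y -> P (x - y).
Proof. by move=> [_ PD PZ] Px Py; rewrite -scaleN1r; apply: PD => //; apply: PZ. Qed.

Lemma submodI (M : lmodType R) (P Q : M -> Prop) :
  submod P -> submod Q -> submod (fun x => P x /\ Q x).
Proof.
move=> [P0 PD PZ] [Q0 QD QZ]; split=> // [x y [Px Qx] [Py Qy] | r x [Px Qx]].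
  by split; [exact: PD | exact: QD].
by split; [exact: PZ | exact: QZ].
Qed.

Section LinearMap.
Variables (M N : lmodType R) (f : {linear M -> N}).

Lemma submod_kernel : submod (fun x => f x = 0).
Proof.
split=> [|x y fx fy|r x fx]; first exact: linear0.
  by rewrite linearD fx fy addr0.
by rewrite linearZ_LR fx scaler0.
Qed.

Lemma submod_image (P : M -> Prop) :
  submod P -> submod (fun y => exists x, P x /\ f x = y).
Proof.
move=> [P0 PD PZ]; split.
- by exists 0; rewrite linear0.
- move=> _ _ [x [Px <-]] [x' [Px' <-]].
  by exists (x + x'); rewrite linearD; split => //; exact: PD.
- move=> r _ [x [Px <-]].
  by exists (r *: x); rewrite linearZ_LR; split => //; exact: PZ.
Qed.

Lemma submod_range : submod (fun y => exists x, f x = y).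
Proof.
apply: submod_ext (@submod_image (fun _ => True) _) => [y|]; last first.
  by split.
by split=> [[x [_ <-]] | [x <-]]; exists x.
Qed.

End LinearMap.

Lemma ses_subquot (M : lmodType R) (Z B : M -> Prop) :
  subquot Z B -> ses B (@zeroP R _) Z (@zeroP R _) Z B id id.
Proof.
move=> [sZ sB BZ]; have [B0 _ _] := sB.
split=> //.
- by split; [exact: subquot0 | split; [exact: subquot0 | split]].
- by split=> [x /BZ | | | y ->].
- by split=> // [y Zy By | z Zz]; [exists y | exists z]; rewrite // /zeroP subrr.
Qed.

Lemma ses_3x3 (M1 M2 M3 : lmodType R) (Z1 B1 : M1 -> Prop) (Z2 B2 : M2 -> Prop)
    (Z3 B3 : M3 -> Prop) (f : M1 -> M2) (g : M2 -> M3) :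
  subquot Z1 B1 -> subquot Z2 B2 -> subquot Z3 B3 ->
  ses B1 (@zeroP R _) B2 (@zeroP R _) B3 (@zeroP R _) f g ->
  ses Z1 (@zeroP R _) Z2 (@zeroP R _) Z3 (@zeroP R _) f g ->
  ses Z1 B1 Z2 B2 Z3 B3 f g.
Proof.
move=> sq1 sq2 sq3 [_ _ [Bf _ Bg _] _ [_ B_mid B_onto]]
  [_ [f_lin g_lin] [Zf _ Zg _] Z_inj [Z_comp Z_mid Z_onto]].
have [[sZ1 _ B1Z1] [sZ2 _ B2Z2] [_ [B30 _ _] _]] := And3 sq1 sq2 sq3.
have fB := zmod_morphism_linear f_lin; have gB := zmod_morphism_linear g_lin.
split=> //; last split.
- move=> x Zx Bfx.
  have [x' Bx' /subr0_eq fx'] := B_mid _ Bfx (Z_comp x Zx).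
  have Zxx' : Z1 (x - x') by apply: submodB => //; exact: B1Z1.
  have /subr0_eq -> : x - x' = 0 by apply: Z_inj; rewrite // /zeroP fB fx' subrr.
  exact: Bx'.
- by move=> x /Z_comp ->.
- move=> y Zy /B_onto [y' By' /subr0_eq gy'].
  have Zyy' : Z2 (y - y') by apply: submodB => //; exact: B2Z2.
  have gyy' : zeroP (g (y - y')) by rewrite /zeroP gB gy' subrr.
  have [x Zx] := Z_mid _ Zyy' gyy'.
  by rewrite /zeroP addrAC => /subr0_eq yx; exists x; rewrite // yx.
- by move=> z /Z_onto [y Zy /subr0_eq gy]; exists y; rewrite // gy subrr.
Qed.

End Subquotients.

Section LowDegrees.
Variables (R : nzRingType) (K : bicomplex R).
Local Notation d10 := (d10 K).
Local Notation d01 := (d01 K).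
Local Notation d21 := (d21 K).

Lemma dtot0_linear : linear (dtot0 K).
Proof. by move=> r y y'; rewrite /dtot0 !linearP. Qed.

Lemma dtot1_linear : linear (dtot1 K).
Proof.
move=> r [a b] [a' b']; rewrite /dtot1 /= !linearP.
by congr (_, (_, _)); rewrite /= scalerDr addrACA.
Qed.

Lemma incl1_linear : linear (incl1 K).
Proof. by move=> r a a'; congr (_, _); rewrite /= scaler0 addr0. Qed.

Lemma pi1_1_linear : linear (pi1_1 K).
Proof. by []. Qed.

HB.instance Definition _ :=
  GRing.isLinear.Build R (C0 K) (C1 K) *:%R (dtot0 K) dtot0_linear.
HB.instance Definition _ :=
  GRing.isLinear.Build R (C1 K) (C2 K) *:%R (dtot1 K) dtot1_linear.
HB.instance Definition _ :=
  GRing.isLinear.Build R (Cpq K 1 0) (C1 K) *:%R (incl1 K) incl1_linear.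
HB.instance Definition _ :=
  GRing.isLinear.Build R (C1 K) (Cpq K 0 1) *:%R (pi1_1 K) pi1_1_linear.

Lemma Z1CP (y : C1 K) :
  Z1C K y <-> [/\ d10 y.1 + d21 y.2 = 0, d01 y.1 + d10 y.2 = 0 & d01 y.2 = 0].
Proof. by split=> [[-> -> ->] | [E10 E11 E02]] //; rewrite /Z1C /dtot1 E10 E11 E02. Qed.

Lemma B1N0_Z1N0 (a : Cpq K 1 0) : B1N0 K a -> Z1N0 K a.
Proof.
move=> [y [Ny <-]]; split; rewrite /N0.
- by have := dd_11 y; rewrite Ny linear0 add0r.
- by have := dd_20_0 y; rewrite Ny linear0 addr0.
Qed.

Lemma B1C_Z1C (y : C1 K) : B1C K y -> Z1C K y.
Proof.
move=> [u <-]; apply/Z1CP; split; [exact: dd_20_0 | | exact: dd_02].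
by rewrite addrC; exact: dd_11.
Qed.

Lemma Z1C_ker_rho1 (y : C1 K) : Z1C K y -> ker_rho1 K (pi1_1 K y).
Proof.
move=> Zy; have Ay : pi1_2 K (dtot1 K y) = 0 by rewrite Zy.
split; first by exists y.
exists 0; split; last by exists 0; rewrite /N0 !linear0.
exists y; split=> //.
by have [E10 _ _] := (Z1CP y).1 Zy; rewrite /pi1_1 addrC E10.
Qed.

Lemma ker_rho1_lift (xi : Cpq K 0 1) :
  ker_rho1 K xi -> exists2 y, Z1C K y & pi1_1 K y = xi.
Proof.
move=> [_ [_ [[eta [<- [E11 E02] ->]] [a [Na da]]]]].
exists (eta.1 - a, eta.2) => //; apply/Z1CP; split=> /=; last exact: E02.
- by rewrite linearB da /pi1_1 opprD addrCA subrr addr0 addNr.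
- by rewrite linearB Na subr0.
Qed.

Lemma B1C0_ker_rho1 (b : Cpq K 0 1) : B1C0 K b -> ker_rho1 K b.
Proof.
move=> [y <-]; have Zy : Z1C K (dtot0 K y) by apply: B1C_Z1C; exists y.
exact: Z1C_ker_rho1 Zy.
Qed.

Lemma incl1_Z1N0 (a : Cpq K 1 0) : Z1N0 K a -> Z1C K (incl1 K a).
Proof. by move=> [Na da]; apply/Z1CP; rewrite /= !linear0 !addr0. Qed.

Lemma Z1C_pi1_eq0 (y : C1 K) : Z1C K y -> pi1_1 K y = 0 -> Z1N0 K y.1.
Proof.
case/Z1CP=> E10 E11 _ y2; rewrite /pi1_1 in y2.
by split; [move: E11 | move: E10]; rewrite y2 linear0 addr0.
Qed.

Lemma subquot_H1N0 : subquot (Z1N0 K) (B1N0 K).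
Proof.
split; last exact: B1N0_Z1N0.
- by apply: submodI; apply: submod_kernel.
- by apply: submod_image; apply: submod_kernel.
Qed.

Lemma subquot_H1C : subquot (Z1C K) (B1C K).
Proof.
split; [exact: submod_kernel | exact: submod_range | exact: B1C_Z1C].
Qed.

Lemma subquot_ker_rho1 : subquot (ker_rho1 K) (B1C0 K).
Proof.
split; [| exact: submod_range | exact: B1C0_ker_rho1].
apply: submod_ext (submod_image (pi1_1 K) (submod_kernel (dtot1 K))) => xi.
split=> [[y [Zy <-]] | /ker_rho1_lift [y Zy <-]]; first exact: Z1C_ker_rho1.
by exists y.
Qed.

Lemma ses_B1 : ses (B1N0 K) (@zeroP R _) (B1C K) (@zeroP R _) (B1C0 K) (@zeroP R _)
  (incl1 K) (pi1_1 K).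
Proof.
have [_ sB1N0 _] := subquot_H1N0; have [_ sB1C _] := subquot_H1C.
have [_ sB1C0 _] := subquot_ker_rho1.
split.
- by split; [| split]; exact: subquot0.
- by split; exact: linearP.
- split=> [_ [y [Ny <-]] | x -> | _ [y <-] | y ->]; rewrite ?linear0 //.
    by exists y; rewrite /dtot0 Ny.
  by exists y.
- by move=> a _ /(congr1 fst).
- split=> // [_ [u <-] du | _ [u <-]].
    rewrite /zeroP /= in du.
    by exists (d10 u); [exists u | rewrite /zeroP /dtot0 du subrr].
  by exists (dtot0 K u); [exists u | rewrite /zeroP subrr].
Qed.

Lemma ses_Z1 : ses (Z1N0 K) (@zeroP R _) (Z1C K) (@zeroP R _) (ker_rho1 K) (@zeroP R _)
  (incl1 K) (pi1_1 K).
Proof.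
have [sZ1N0 _ _] := subquot_H1N0; have [sZ1C _ _] := subquot_H1C.
have [sker _ _] := subquot_ker_rho1.
split.
- by split; [| split]; exact: subquot0.
- by split; exact: linearP.
- split=> [| x -> | | y ->]; rewrite ?linear0 //.
    exact: incl1_Z1N0.
  exact: Z1C_ker_rho1.
- by move=> a _ /(congr1 fst).
- split=> // [y Zy y2 | xi /ker_rho1_lift [y Zy <-]].
    exists y.1; first exact: Z1C_pi1_eq0.
    by case: y Zy y2 => a b _ /= b0; rewrite /zeroP /incl1 b0 subrr.
  by exists y; rewrite // /zeroP subrr.
Qed.

End LowDegrees.

Theorem theorem5p3 (R : nzRingType) (K : bicomplex R) :
  (* rows *)
  [/\ (* 0 -> B^1(N_0) -> B^1(C) -> B^1(C^{0,.}) -> 0 *)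
      ses (B1N0 K) (@zeroP R _) (B1C K) (@zeroP R _) (B1C0 K) (@zeroP R _)
          (incl1 K) (pi1_1 K),
      (* 0 -> Z^1(N_0) -> Z^1(C) -> ker rho_1 -> 0 *)
      ses (Z1N0 K) (@zeroP R _) (Z1C K) (@zeroP R _) (ker_rho1 K) (@zeroP R _)
          (incl1 K) (pi1_1 K) &
      (* 0 -> H^1(N_0) -> H^1(C) -> ker rho_1 / B^1(C^{0,.}) -> 0,
         maps induced by those of the second row *)
      ses (Z1N0 K) (B1N0 K) (Z1C K) (B1C K) (ker_rho1 K) (B1C0 K)
          (incl1 K) (pi1_1 K)] /\
  (* columns: 0 -> B -> Z -> Z/B -> 0 (inclusion, canonical projection) *)
  [/\ ses (B1N0 K) (@zeroP R _) (Z1N0 K) (@zeroP R _) (Z1N0 K) (B1N0 K) id id,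
      ses (B1C K) (@zeroP R _) (Z1C K) (@zeroP R _) (Z1C K) (B1C K) id id &
      ses (B1C0 K) (@zeroP R _) (ker_rho1 K) (@zeroP R _) (ker_rho1 K) (B1C0 K)
          id id].
Proof.
have [sqN0 sqC sqC0] := And3 (subquot_H1N0 K) (subquot_H1C K) (subquot_ker_rho1 K).
split; split; [exact: ses_B1 | exact: ses_Z1 | | exact: ses_subquot ..].
exact: ses_3x3 (ses_B1 K) (ses_Z1 K).
Qed.
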